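(* Let $F\colon\mathscr C\to\mathscr D$ be a strict symmetric monoidal functor between small permutative categories. Then $F$ is an equivalence of underlying categories if and only if $\Phi(F)\colon\Phi(\mathscr C)\to\Phi(\mathscr D)$ is an equivalence of underlying categories.
   Context: A permutative category is a symmetric monoidal category $(\mathscr C,\otimes,\mathbf 1,\tau)$ whose associativity and unit isomorphisms are identities. For $\sigma\in\Sigma_m$ the coherence isomorphism $\bigotimes_{i=1}^mX_i\to\bigotimes_{i=1}^mX_{\sigma^{-1}(i)}$ associated to $\sigma$ is the composite of maps $\mathrm{id}\otimes\tau_{X,Y}\otimes\mathrm{id}$ along a decomposition of $\sigma$ into adjacent transpositions. Let $\omega=\{1,2,\dots\}$ and $\mathcal M$ the monoid of injections $\omega\to\omega$. For a small permutative category $\mathscr C$, $\Phi(\mathscr C)$ is the category whose objects are sequences $X=(X_1,X_2,\dots)$ of objects of $\mathscr C$ with $X_i=\mathbf 1$ for almost all $i$, with $\mathrm{Hom}_{\Phi(\mathscr C)}(X,Y)=\mathrm{Hom}_{\mathscr C}(\bigotimes_{i\in\omega}X_i,\bigotimes_{i\in\omega}Y_i)$ (the ordered tensor product of the finitely many non-unit entries) and composition from $\mathscr C$; it carries an action of the monoid $\mathcal M$ with $(u_*X)_i=X_j$ if $i=u(j)$ and $\mathbf 1$ if $i\notin\mathrm{im}(u)$, structure isomorphisms $X\to u_*X$ given by coherence isomorphisms, and a partial sum (merging disjointly supported sequences), making it a parsummable category. For a strict symmetric monoidal functor $F$, $\Phi(F)$ sends $X$ to $(F(X_1),F(X_2),\dots)$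 and a morphism $f$ to $F(f)$. *)

From Stdlib Require Import ClassicalEpsilon PeanoNat Lia.
Set Implicit Arguments.
Unset Strict Implicit.

Unset Implicit Arguments.
Record Category : Type := {
  ob :> Type;
  hom : ob -> ob -> Type;
  idm : forall a : ob, hom a a;
  comp : forall a b c : ob, hom b c -> hom a b -> hom a c;
  comp_idl : forall a b (f : hom a b), comp _ _ _ (idm b) f = f;
  comp_idr : forall a b (f : hom a b), comp _ _ _ f (idm a) = f;
  comp_assoc : forall a b c d (f : hom a b) (g : hom b c) (h : hom c d),
      comp _ _ _ h (comp _ _ _ g f) = comp _ _ _ (comp _ _ _ h g) f }.

Set Implicit Arguments.
Arguments hom {C} a b : rename.
Arguments idm {C} a : rename.
Arguments comp {C a b c} g f : rename.

Definition eqmor (C : Category) (a b : C) (e : a = b) : hom a b :=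
  match e in _ = y return hom a y with eq_refl => idm a end.

Lemma eqmor_refl (C : Category) (a : C) : eqmor (eq_refl a) = idm a.
Proof. reflexivity. Qed.

Lemma eqmor_sym_l (C : Category) (a b : C) (e : a = b) :
  comp (eqmor (eq_sym e)) (eqmor e) = idm a.
Proof. destruct e; simpl; apply comp_idl. Qed.

Lemma eqmor_sym_r (C : Category) (a b : C) (e : a = b) :
  comp (eqmor e) (eqmor (eq_sym e)) = idm b.
Proof. destruct e; simpl; apply comp_idl. Qed.

Record Functor (C D : Category) : Type := {
  fob :> C -> D;
  fmor : forall a b : C, hom a b -> hom (fob a) (fob b);
  fmor_id : forall a : C, fmor (idm a) = idm (fob a);
  fmor_comp : forall (a b c : C) (f : hom a b) (g : hom b c),
      fmor (comp g f) = comp (fmor g) (fmor f) }.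

Arguments fmor {C D} F {a b} f : rename.

Definition FunId (C : Category) : Functor C C.
Proof.
  refine {| fob := fun a => a; fmor := fun a b f => f |}; reflexivity.
Defined.

Definition FunComp (C D E : Category) (G : Functor D E) (F : Functor C D) :
  Functor C E.
Proof.
  refine {| fob := fun a => G (F a); fmor := fun a b f => fmor G (fmor F f) |}.
  - intro a; rewrite !fmor_id; reflexivity.
  - intros; rewrite !fmor_comp; reflexivity.
Defined.

Definition NatIso (C D : Category) (F G : Functor C D) : Prop :=
  exists (eta : forall a : C, hom (F a) (G a))
         (inv : forall a : C, hom (G a) (F a)),
    (forall a, comp (inv a) (eta a) = idm (F a)) /\
    (forall a, comp (eta a) (inv a) = idm (G a)) /\
    (forall (a b : C) (f : hom a b),
        comp (eta b) (fmor F f) = comp (fmor G f) (eta a)).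

Definition IsEquivalence (C D : Category) (F : Functor C D) : Prop :=
  exists G : Functor D C,
    NatIso (FunComp G F) (FunId C) /\ NatIso (FunComp F G) (FunId D).

Record Permutative : Type := {
  pcat :> Category;
  tens : pcat -> pcat -> pcat;
  tensm : forall a b c d : pcat, hom a b -> hom c d -> hom (tens a c) (tens b d);
  unit : pcat;
  tensm_id : forall a c : pcat, tensm (idm a) (idm c) = idm (tens a c);
  tensm_comp : forall (a b e c d g : pcat) (f : hom a b) (f' : hom b e)
                      (h : hom c d) (h' : hom d g),
      tensm (comp f' f) (comp h' h) = comp (tensm f' h') (tensm f h);
  tens_assoc : forall a b c : pcat, tens a (tens b c) = tens (tens a b) c;
  tens_unitl : forall a : pcat, tens unit a = a;
  tens_unitr : forall a : pcat, tens a unit = a;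
  (* the identity associator / unitors are natural *)
  tensm_assoc : forall (a b c d e g : pcat) (f : hom a b) (h : hom c d) (k : hom e g),
      comp (eqmor (tens_assoc b d g)) (tensm f (tensm h k))
      = comp (tensm (tensm f h) k) (eqmor (tens_assoc a c e));
  tensm_unitl : forall (a b : pcat) (f : hom a b),
      comp (eqmor (tens_unitl b)) (tensm (idm unit) f) = comp f (eqmor (tens_unitl a));
  tensm_unitr : forall (a b : pcat) (f : hom a b),
      comp (eqmor (tens_unitr b)) (tensm f (idm unit)) = comp f (eqmor (tens_unitr a));
  sym : forall a b : pcat, hom (tens a b) (tens b a);
  sym_nat : forall (a b c d : pcat) (f : hom a b) (g : hom c d),
      comp (sym b d) (tensm f g) = comp (tensm g f) (sym a c);
  sym_inv : forall a b : pcat, comp (sym b a) (sym a b) = idm (tens a b);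
  sym_unit : forall a : pcat,
      sym a unit = eqmor (eq_trans (tens_unitr a) (eq_sym (tens_unitl a)));
  sym_hexagon : forall a b c : pcat,
      sym a (tens b c)
      = comp (eqmor (tens_assoc b c a))
         (comp (tensm (idm b) (sym a c))
          (comp (eqmor (eq_sym (tens_assoc b a c)))
           (comp (tensm (sym a b) (idm c)) (eqmor (tens_assoc a b c))))) }.

Arguments tens {_} _ _.
Arguments tensm {_ _ _ _ _} _ _.
Arguments unit {_}.
Arguments sym {_} _ _.

Record StrictSMFunctor (C D : Permutative) : Type := {
  sfun :> Functor C D;
  sfun_tens : forall a b : C, sfun (tens a b) = tens (sfun a) (sfun b);
  sfun_unit : sfun unit = unit;
  sfun_tensm : forall (a b c d : C) (f : hom a b) (g : hom c d),
      comp (eqmor (sfun_tens b d)) (fmor sfun (tensm f g))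
      = comp (tensm (fmor sfun f) (fmor sfun g)) (eqmor (sfun_tens a c));
  sfun_sym : forall a b : C,
      comp (eqmor (sfun_tens b a)) (fmor sfun (sym a b))
      = comp (sym (sfun a) (sfun b)) (eqmor (sfun_tens a b)) }.

(* Sequences are indexed by nat; index i stands for the paper's i+1 in omega. *)
Record PhiOb (C : Permutative) : Type := {
  phi_seq : nat -> C;
  phi_supp : exists N : nat, forall i, N <= i -> phi_seq i = unit }.

Arguments phi_seq {C} _.
Arguments phi_supp {C} _.

Fixpoint tens_upto (C : Permutative) (X : nat -> C) (n : nat) : C :=
  match n with
  | 0 => unit
  | S n => tens (tens_upto X n) (X n)
  end.

Definition supp_bound (C : Permutative) (X : PhiOb C) : nat :=
  proj1_sig (constructive_indefinite_description _ (phi_supp X)).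

Lemma supp_boundP (C : Permutative) (X : PhiOb C) :
  forall i, supp_bound X <= i -> phi_seq X i = unit.
Proof. unfold supp_bound; destruct constructive_indefinite_description; auto. Qed.

Definition PhiT (C : Permutative) (X : PhiOb C) : C :=
  tens_upto (phi_seq X) (supp_bound X).

Definition PhiCat (C : Permutative) : Category.
Proof.
  refine {| ob := PhiOb C;
            hom := fun X Y => @hom C (PhiT X) (PhiT Y);
            idm := fun X => idm (PhiT X);
            comp := fun X Y Z g f => comp g f |}.
  - intros; apply comp_idl.
  - intros; apply comp_idr.
  - intros; apply comp_assoc.
Defined.

Lemma tens_upto_stable (C : Permutative) (X : nat -> C) (N : nat) :
  (forall i, N <= i -> X i = unit) ->
  forall n, N <= n -> tens_upto X n = tens_upto X N.
Proof.
  intros H n Hn; induction Hn as [|n Hn IH]; [reflexivity|].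
  simpl; rewrite (H n Hn), tens_unitr; exact IH.
Qed.

Lemma sfun_tens_upto (C D : Permutative) (F : StrictSMFunctor C D)
      (X : nat -> C) (n : nat) :
  F (tens_upto X n) = tens_upto (fun i => F (X i)) n.
Proof.
  induction n as [|n IH]; simpl; [apply sfun_unit|].
  rewrite sfun_tens, IH; reflexivity.
Qed.

Definition PhiFob (C D : Permutative) (F : StrictSMFunctor C D) (X : PhiOb C) :
  PhiOb D.
Proof.
  refine {| phi_seq := fun i => F (phi_seq X i) |}.
  destruct (phi_supp X) as [N HN]; exists N; intros i Hi.
  rewrite (HN i Hi); apply sfun_unit.
Defined.

Lemma PhiFob_T (C D : Permutative) (F : StrictSMFunctor C D) (X : PhiOb C) :
  F (PhiT X) = PhiT (PhiFob F X).
Proof.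
  unfold PhiT; rewrite sfun_tens_upto.
  set (N := supp_bound X); set (N' := supp_bound (PhiFob F X)).
  assert (H1 : forall i, N <= i -> F (phi_seq X i) = unit).
  { intros i Hi; rewrite (supp_boundP Hi); apply sfun_unit. }
  assert (H2 : forall i, N' <= i -> phi_seq (PhiFob F X) i = unit)
    by apply supp_boundP.
  simpl in H2.
  transitivity (tens_upto (fun i => F (phi_seq X i)) (Nat.max N N')).
  - symmetry; apply tens_upto_stable; [exact H1 | lia].
  - change (tens_upto (phi_seq (PhiFob F X)) (Nat.max N N') =
            tens_upto (phi_seq (PhiFob F X)) N').
    apply tens_upto_stable; [exact H2 | lia].
Qed.

Definition PhiFunctor (C D : Permutative) (F : StrictSMFunctor C D) :
  Functor (PhiCat C) (PhiCat D).
Proof.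
  refine {| fob := (PhiFob F : PhiCat C -> PhiCat D);
            fmor := fun X Y (f : @hom C (PhiT X) (PhiT Y)) =>
              (comp (eqmor (PhiFob_T F Y))
                 (comp (fmor F f) (eqmor (eq_sym (PhiFob_T F X)))) :
                 @hom D (PhiT (PhiFob F X)) (PhiT (PhiFob F Y))) |}.
  - intro X; simpl. rewrite fmor_id, comp_idl. apply eqmor_sym_r.
  - intros X Y Z f g; simpl. rewrite fmor_comp.
    rewrite <- !comp_assoc.
    rewrite (comp_assoc _ _ _ _ _ _ (eqmor (PhiFob_T F Y)) (eqmor (eq_sym (PhiFob_T F Y)))).
    rewrite eqmor_sym_l, comp_idl. reflexivity.
Defined.

(* The ordered tensor product [PhiT] is a functor Phi(C) -> C which is the
   identity on morphisms and has the one-entry sequences (c, 1, 1, ...) as a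
   quasi-inverse, so it is an equivalence.  Since F is strict monoidal, the
   square formed by Phi(F), F and the two tensor-product functors commutes up
   to the canonical isomorphism F (PhiT X) = PhiT (Phi(F) X); by two-out-of-three
   for equivalences, F is an equivalence iff Phi(F) is. *)
From Stdlib Require Import Lia.

Set Implicit Arguments.

Lemma natiso_sym (C D : Category) (F G : Functor C D) : NatIso F G -> NatIso G F.
Proof.
  intros [eta [inv [inv_eta [eta_inv eta_nat]]]].
  exists inv, eta; split; [exact eta_inv | split; [exact inv_eta |]].
  intros a b f.
  rewrite <- (comp_idr _ _ _ (comp (inv b) (fmor G f))), <- (eta_inv a).
  rewrite comp_assoc, <- (comp_assoc _ _ _ _ _ (eta a) (fmor G f) (inv b)).
  rewrite <- eta_nat, comp_assoc, inv_eta, comp_idl; reflexivity.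
Qed.

Lemma natiso_trans (C D : Category) (F G H : Functor C D) :
  NatIso F G -> NatIso G H -> NatIso F H.
Proof.
  intros [e1 [i1 [ie1 [ei1 n1]]]] [e2 [i2 [ie2 [ei2 n2]]]].
  exists (fun a => comp (e2 a) (e1 a)), (fun a => comp (i1 a) (i2 a)).
  split; [|split]; intros.
  - rewrite comp_assoc, <- (comp_assoc _ _ _ _ _ (e2 a) (i2 a) (i1 a)), ie2, comp_idr.
    apply ie1.
  - rewrite comp_assoc, <- (comp_assoc _ _ _ _ _ (i1 a) (e1 a) (e2 a)), ei1, comp_idr.
    apply ei2.
  - rewrite <- comp_assoc, n1, comp_assoc, n2, comp_assoc; reflexivity.
Qed.

Lemma natiso_whiskerl (C D E : Category) (H : Functor D E) (F G : Functor C D) :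
  NatIso F G -> NatIso (FunComp H F) (FunComp H G).
Proof.
  intros [e [i [ie [ei n]]]].
  exists (fun a => fmor H (e a)), (fun a => fmor H (i a)).
  split; [|split]; intros; simpl.
  - rewrite <- fmor_comp, ie; apply fmor_id.
  - rewrite <- fmor_comp, ei; apply fmor_id.
  - rewrite <- !fmor_comp, n; reflexivity.
Qed.

Lemma natiso_whiskerr (B C D : Category) (F G : Functor C D) (K : Functor B C) :
  NatIso F G -> NatIso (FunComp F K) (FunComp G K).
Proof.
  intros [e [i [ie [ei n]]]].
  exists (fun a => e (K a)), (fun a => i (K a)).
  split; [|split]; intros; simpl; auto.
Qed.

(* Composition of functors is associative and unital up to conversion, so
   below a [NatIso] between two bracketings is used without any coherence
   isomorphism. *)
Lemma equivalence_natiso (C D : Category) (F F' : Functor C D) :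
  NatIso F F' -> IsEquivalence F -> IsEquivalence F'.
Proof.
  intros iso [G [GF FG]]; exists G; split.
  - exact (natiso_trans (natiso_whiskerl G (natiso_sym iso)) GF).
  - exact (natiso_trans (natiso_whiskerr G (natiso_sym iso)) FG).
Qed.

Lemma equivalence_comp (C D E : Category) (F : Functor C D) (G : Functor D E) :
  IsEquivalence F -> IsEquivalence G -> IsEquivalence (FunComp G F).
Proof.
  intros [F' [F'F FF']] [G' [G'G GG']]; exists (FunComp F' G'); split.
  - exact (natiso_trans (natiso_whiskerl F' (natiso_whiskerr F G'G)) F'F).
  - exact (natiso_trans (natiso_whiskerl G (natiso_whiskerr G' FF')) GG').
Qed.

Lemma equivalence_cancell (C D E : Category) (F : Functor C D) (G : Functor D E) :
  IsEquivalence G -> IsEquivalence (FunComp G F) -> IsEquivalence F.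
Proof.
  intros [G' [G'G GG']] GF_equiv.
  apply (equivalence_natiso (natiso_whiskerr F G'G)).
  apply (equivalence_comp (F := FunComp G F) (G := G')); [exact GF_equiv |].
  exists G; split; assumption.
Qed.

Lemma equivalence_cancelr (C D E : Category) (F : Functor C D) (G : Functor D E) :
  IsEquivalence F -> IsEquivalence (FunComp G F) -> IsEquivalence G.
Proof.
  intros [F' [F'F FF']] GF_equiv.
  apply (equivalence_natiso (natiso_whiskerl G FF')).
  apply (equivalence_comp (F := F') (G := FunComp G F)); [| exact GF_equiv].
  exists F; split; assumption.
Qed.

Lemma equivalence_square (A B C D : Category) (P : Functor A B) (F : Functor C D)
      (S : Functor A C) (T : Functor B D) :
  IsEquivalence S -> IsEquivalence T -> NatIso (FunComp T P) (FunComp F S) ->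
  IsEquivalence F <-> IsEquivalence P.
Proof.
  intros S_equiv T_equiv square; split; intro equiv.
  - apply (equivalence_cancell T_equiv).
    apply (equivalence_natiso (natiso_sym square)).
    exact (equivalence_comp S_equiv equiv).
  - apply (equivalence_cancelr S_equiv).
    apply (equivalence_natiso square).
    exact (equivalence_comp equiv T_equiv).
Qed.

Section TensorProductEquivalence.

Variable C : Permutative.

Definition phi_single (c : C) : PhiOb C.
Proof.
  refine {| phi_seq := fun i => match i with 0 => c | _ => unit end |}.
  exists 1; intros [|i] Hi; [lia | reflexivity].
Defined.

Lemma PhiT_single (c : C) : PhiT (phi_single c) = c.
Proof.
  unfold PhiT.
  set (N := Nat.max (supp_bound (phi_single c)) 1).
  assert (single_supp : forall i, 1 <= i -> phi_seq (phi_single c) i = unit)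
    by (intros [|i] Hi; [lia | reflexivity]).
  rewrite <- (tens_upto_stable (supp_boundP (X := phi_single c)) (n := N)) by lia.
  rewrite (tens_upto_stable single_supp (n := N)) by lia.
  apply tens_unitl.
Qed.

Definition PhiT_functor : Functor (PhiCat C) C.
Proof.
  refine {| fob := fun X : PhiCat C => PhiT X; fmor := fun X Y f => f |};
    reflexivity.
Defined.

Definition phi_single_functor : Functor C (PhiCat C).
Proof.
  refine {| fob := (phi_single : C -> PhiCat C);
            fmor := fun a b f =>
              (comp (eqmor (eq_sym (PhiT_single b))) (comp f (eqmor (PhiT_single a)))
               : @hom C (PhiT (phi_single a)) (PhiT (phi_single b))) |}.
  - intro a; simpl; rewrite comp_idl; apply eqmor_sym_l.
  - intros a b c f g; simpl; rewrite <- !comp_assoc.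
    rewrite (comp_assoc _ _ _ _ _ _ (eqmor (eq_sym (PhiT_single b)))).
    rewrite eqmor_sym_r, comp_idl; reflexivity.
Defined.

Lemma PhiT_single_iso : NatIso (FunComp PhiT_functor phi_single_functor) (FunId C).
Proof.
  exists (fun c => eqmor (PhiT_single c)), (fun c => eqmor (eq_sym (PhiT_single c))).
  split; [|split]; intros; simpl.
  - apply eqmor_sym_l.
  - apply eqmor_sym_r.
  - rewrite comp_assoc, eqmor_sym_r, comp_idl; reflexivity.
Qed.

Lemma single_PhiT_iso : NatIso (FunComp phi_single_functor PhiT_functor) (FunId (PhiCat C)).
Proof.
  exists (fun X => (eqmor (PhiT_single (PhiT X)) : @hom (PhiCat C) (phi_single (PhiT X)) X)),
         (fun X => (eqmor (eq_sym (PhiT_single (PhiT X))) : @hom (PhiCat C) X (phi_single (PhiT X)))).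
  split; [|split]; intros; simpl.
  - apply eqmor_sym_l.
  - apply eqmor_sym_r.
  - rewrite comp_assoc, eqmor_sym_r, comp_idl; reflexivity.
Qed.

Lemma PhiT_functor_equivalence : IsEquivalence PhiT_functor.
Proof. exists phi_single_functor; split; [exact single_PhiT_iso | exact PhiT_single_iso]. Qed.

End TensorProductEquivalence.

Lemma PhiT_PhiFunctor_iso (C D : Permutative) (F : StrictSMFunctor C D) :
  NatIso (FunComp (PhiT_functor D) (PhiFunctor F)) (FunComp (sfun F) (PhiT_functor C)).
Proof.
  exists (fun X => eqmor (eq_sym (PhiFob_T F X))), (fun X => eqmor (PhiFob_T F X)).
  split; [|split]; intros; simpl.
  - apply eqmor_sym_r.
  - apply eqmor_sym_l.
  - rewrite !comp_assoc, eqmor_sym_l, comp_idl; reflexivity.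
Qed.

Theorem lemma1p25 (C D : Permutative) (F : StrictSMFunctor C D) :
  IsEquivalence (sfun F) <-> IsEquivalence (PhiFunctor F).
Proof.
  exact (equivalence_square (PhiT_functor_equivalence C) (PhiT_functor_equivalence D)
           (PhiT_PhiFunctor_iso F)).
Qed.
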